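(* Assume $n\ge2$. Then at most one zero of $F$ is acceptable. Consequently, the maximum-likelihood linear model $f(x)=\lambda(1+a(x-x_A))$ with non-negative Poisson means in all bins, obtained from an acceptable zero $a$ of $F$ together with $\lambda=\lambda(a)$, is unique when it exists.
   Context: Data: an integer $N\ge 2$, reals $x_A<x_B$, $R=x_B-x_A$, and bins $i=1,\dots,N$ with widths $\Delta x_i>0$ and centers $x_i$ that tile $[x_A,x_B]$ contiguously in increasing order, so that $x_1-x_A=\Delta x_1/2$, $x_N-x_A=R-\Delta x_N/2$ and $0<x_1-x_A<\dots<x_N-x_A<R$. The counts are $y_i\in\{0,1,2,\dots\}$, $M=\sum_i y_i$, and $n$ is the number of indices with $y_i\ge1$. Write $d_i=x_i-x_A$. Define $$g(a)=\sum_{i=1}^N y_i\frac{d_i}{1+a d_i}$$ for $a\notin\{-1/d_i: y_i\ge 1\}$. Define $$F(a)=1+\frac R2\Big(a-\frac{M}{g(a)}\Big)$$ wherever $g(a)$ is finite and nonzero; at poles of $g$, $F(a)=1+aR/2$ by continuity. Let $\lambda(a)=M/(R(1+aR/2))$ for $a\neq-2/R$. A zero $a^*$ of $F$ is called acceptable if $a^*\ne-2/R$ and $\lambda(a^* )(1+a^*d_i)\ge0$ for all $i$, i.e. the Poisson means $\mu_i=\lambda(a^* )(1+a^*d_i)\Delta x_i$ are all non-negative. *)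

From HB Require Import structures.
From mathcomp Require Import all_boot all_order all_algebra.
From mathcomp Require Import reals.
Set Implicit Arguments. Unset Strict Implicit. Unset Printing Implicit Defensive.
Import Order.TTheory GRing.Theory Num.Theory.
Local Open Scope ring_scope.

Section Defs.
Variables (R : realType) (N : nat).
Variables (xA xB : R) (xc : 'I_N -> R) (y : 'I_N -> nat).

Definition Rng : R := xB - xA.
Definition dd (i : 'I_N) : R := xc i - xA.
Definition Mtot : R := \sum_i (y i)%:R.
Definition nocc : nat := #|[set i : 'I_N | (0 < y i)%N]|.
Definition gpole (a : R) : Prop := exists i, (0 < y i)%N /\ 1 + a * dd i = 0.
(* g(a) = sum_i y_i d_i / (1 + a d_i) (meaningful off the poles) *)
Definition gfun (a : R) : R := \sum_i (y i)%:R * (dd i / (1 + a * dd i)).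
(* a is a zero of F: F(a) = 1 + aR/2 at poles of g (by continuity); elsewhere
   F is defined only where g(a) != 0, with F(a) = 1 + R/2 (a - M/g(a)). *)
Definition Fzero (a : R) : Prop :=
  (gpole a /\ 1 + a * Rng / 2 = 0) \/
  (~ gpole a /\ gfun a != 0 /\ 1 + Rng / 2 * (a - Mtot / gfun a) = 0).
Definition lam (a : R) : R := Mtot / (Rng * (1 + a * Rng / 2)).
Definition acceptable (a : R) : Prop :=
  Fzero a /\ a != - 2 / Rng /\ forall i, 0 <= lam a * (1 + a * dd i).
End Defs.

From HB Require Import structures.
From mathcomp Require Import all_boot all_order all_algebra.
From mathcomp Require Import reals.
From mathcomp Require Import ring lra.
Import Order.TTheory GRing.Theory Num.Theory.
Local Open Scope ring_scope.

(* For an acceptable zero a write lambda = lam a and mu_i = lambda (1 + a d_i)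
   for the (per unit length) Poisson intensity of bin i.  Unfolding F(a) = 0
   gives two identities, lambda R (1 + a R / 2) = M and g(a) = lambda R^2 / 2,
   and acceptability makes mu_i > 0 on every occupied bin.  For two acceptable
   zeros a, a' with intensities mu, mu' these identities yield the "cross
   sums" sum_i y_i mu'_i / mu_i = M = sum_i y_i mu_i / mu'_i.  Adding them,
   sum_i y_i (mu_i - mu'_i)^2 / (mu_i mu'_i) = 0, a sum of non-negative terms,
   so mu_i = mu'_i on every occupied bin.  Since there are at least two
   occupied bins and the bin centers are pairwise distinct, the two affine
   intensities agree at two distinct points, hence coincide: a = a' and
   lam a = lam a'. *)

(* If positive weights w satisfy sum w v/u = sum w = sum w u/v, then u = v
   wherever the weight is positive: the two sums differ from sum w by the
   non-negative quantity sum w (u - v)^2 / (u v). *)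
Lemma balanced_ratio_sums {R : realFieldType} {I : finType} (w u v : I -> R) :
  (forall k, 0 <= w k) -> (forall k, 0 < w k -> 0 < u k /\ 0 < v k) ->
  \sum_k w k * (v k / u k) = \sum_k w k ->
  \sum_k w k * (u k / v k) = \sum_k w k ->
  forall k, 0 < w k -> u k = v k.
Proof.
move=> w_ge0 uv_gt0 Svu Suv.
have w_gt0 k : w k != 0 -> 0 < w k by rewrite lt_def w_ge0 andbT.
pose T k := w k * ((u k - v k) ^+ 2 / (u k * v k)).
have T_ge0 k : 0 <= T k.
  have [wk0|wk_ne0] := eqVneq (w k) 0; first by rewrite /T wk0 mul0r.
  have [uk vk] := uv_gt0 k (w_gt0 k wk_ne0).
  by rewrite mulr_ge0 // divr_ge0 ?sqr_ge0 // ltW // mulr_gt0.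
have T_expand k : T k = w k * (v k / u k) + w k * (u k / v k) - 2 * w k.
  have [wk0|wk_ne0] := eqVneq (w k) 0; first by rewrite /T wk0; ring.
  have [uk vk] := uv_gt0 k (w_gt0 k wk_ne0).
  by rewrite /T; field; rewrite !gt_eqF.
have sumT0 : \sum_k T k = 0.
  under eq_bigr do rewrite T_expand.
  by rewrite !big_split /= Svu Suv sumrN -mulr_sumr; ring.
move=> k wk_gt0; have [uk vk] := uv_gt0 k wk_gt0.
have /eqP := @psumr_eq0P _ _ xpredT T (fun k _ => T_ge0 k) sumT0 k isT.
rewrite /T mulf_eq0 (gt_eqF wk_gt0) /= mulf_eq0 invr_eq0.
by rewrite (gt_eqF (mulr_gt0 uk vk)) orbF sqrf_eq0 subr_eq0 => /eqP.
Qed.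

Lemma affine_two_points {R : fieldType} {l1 a1 l2 a2 s t : R} :
  s != t -> l1 != 0 ->
  l1 * (1 + a1 * s) = l2 * (1 + a2 * s) ->
  l1 * (1 + a1 * t) = l2 * (1 + a2 * t) ->
  a1 = a2 /\ l1 = l2.
Proof.
move=> s_ne_t l1_ne0 at_s at_t.
have slope : l1 * a1 = l2 * a2.
  have : (l1 * a1 - l2 * a2) * (s - t) =
         (l1 * (1 + a1 * s) - l2 * (1 + a2 * s)) -
         (l1 * (1 + a1 * t) - l2 * (1 + a2 * t)) by ring.
  rewrite at_s at_t !subrr => /eqP; rewrite mulf_eq0 !subr_eq0 (negPf s_ne_t).
  by rewrite orbF => /eqP.
have intercept : l1 = l2.
  by have := at_s; rewrite !mulrDr !mulr1 !mulrA slope => /addIr.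
by split=> //; apply: (mulfI l1_ne0); rewrite slope intercept.
Qed.

Section AcceptableZero.
Context {R : realType} {N : nat} {xA xB : R} {xc : 'I_N -> R} {y : 'I_N -> nat}.
Hypothesis xA_lt_xB : xA < xB.
Hypothesis Mtot_ne0 : Mtot R y != 0.

Local Notation Rg := (Rng xA xB).
Local Notation d := (dd xA xc).
Local Notation M := (Mtot R y).

Lemma Rng_ne0 : Rg != 0.
Proof. by rewrite /Rng subr_eq0 gt_eqF. Qed.

(* The excluded value a = -2/R is exactly where 1 + a R / 2 vanishes. *)
Lemma acceptable_scale_ne0 {a : R} :
  acceptable xA xB xc y a -> 1 + a * Rg / 2 != 0.
Proof.
move=> [_ [a_ne _]]; apply: contra a_ne => /eqP scale0; apply/eqP.
have -> : a = (1 + a * Rg / 2 - 1) * 2 / Rg by field; exact: Rng_ne0.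
by rewrite scale0; field; exact: Rng_ne0.
Qed.

Lemma acceptable_regular {a : R} : acceptable xA xB xc y a ->
  [/\ ~ gpole xA xc y a, gfun xA xc y a != 0 &
      1 + Rg / 2 * (a - M / gfun xA xc y a) = 0].
Proof.
move=> acc; have scale_ne0 := acceptable_scale_ne0 acc.
case: acc => [[[_ scale0]|[nopole [g_ne0 F0]]] _]; last by [].
by rewrite scale0 eqxx in scale_ne0.
Qed.

Lemma lam_ne0 {a : R} : acceptable xA xB xc y a -> lam xA xB y a != 0.
Proof.
move=> acc; rewrite /lam mulf_neq0 // invr_eq0 mulf_neq0 //.
  exact: Rng_ne0.
exact: acceptable_scale_ne0.
Qed.

Lemma lam_total {a : R} : acceptable xA xB xc y a ->
  lam xA xB y a * (Rg * (1 + a * Rg / 2)) = M.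
Proof.
move=> acc; rewrite /lam divfK // mulf_neq0 //; first exact: Rng_ne0.
exact: acceptable_scale_ne0.
Qed.

(* F(a) = 0 rewritten in terms of lambda: g(a) = lambda(a) R^2 / 2. *)
Lemma gfun_acceptable {a : R} : acceptable xA xB xc y a ->
  gfun xA xc y a = lam xA xB y a * Rg ^+ 2 / 2.
Proof.
move=> acc; have [_ g_ne0 F0] := acceptable_regular acc.
have scale_ne0 := acceptable_scale_ne0 acc.
have scale2_ne0 : 2 + a * Rg != 0.
  have -> : 2 + a * Rg = 2 * (1 + a * Rg / 2) by field.
  by rewrite mulf_neq0 // pnatr_eq0.
apply/eqP; rewrite -subr_eq0; apply/eqP.
have -> : gfun xA xc y a - lam xA xB y a * Rg ^+ 2 / 2 =
    gfun xA xc y a / (1 + a * Rg / 2) * (1 + Rg / 2 * (a - M / gfun xA xc y a)).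
  by rewrite /lam; field; rewrite g_ne0 scale2_ne0 Rng_ne0.
by rewrite F0 mulr0.
Qed.

(* The intensity lambda (1 + a d_i) of an occupied bin is positive: it is
   non-negative by acceptability and non-zero because a is not a pole. *)
Lemma intensity_gt0 {a : R} {i : 'I_N} : acceptable xA xB xc y a ->
  (0 < y i)%N -> 0 < lam xA xB y a * (1 + a * d i).
Proof.
move=> acc occ; have [nopole _ _] := acceptable_regular acc.
have bin_ne0 : 1 + a * d i != 0 by apply/eqP => bin0; apply: nopole; exists i.
by rewrite lt_def mulf_neq0 ?lam_ne0 //=; case: acc => _ [_]; apply.
Qed.

Lemma cross_sum {a1 a2 : R} :
  acceptable xA xB xc y a1 -> acceptable xA xB xc y a2 ->
  \sum_i (y i)%:R * (lam xA xB y a2 * (1 + a2 * d i) /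
                     (lam xA xB y a1 * (1 + a1 * d i))) = M.
Proof.
move=> acc1 acc2.
have l1_ne0 := lam_ne0 acc1.
transitivity (\sum_i (lam xA xB y a2 / lam xA xB y a1) *
   ((y i)%:R + (a2 - a1) * ((y i)%:R * (d i / (1 + a1 * d i))))).
  apply: eq_bigr => i _.
  have [y0|occ] := posnP (y i); first by rewrite y0 !mul0r mulr0 addr0 mulr0.
  have bin_ne0 : 1 + a1 * d i != 0.
    by apply: contraTneq (intensity_gt0 acc1 occ) => ->; rewrite mulr0 ltxx.
  by field; rewrite l1_ne0 bin_ne0.
rewrite -mulr_sumr big_split /= -mulr_sumr -/(Mtot R y) -/(gfun xA xc y a1).
rewrite gfun_acceptable // -{1}(lam_total acc1) -(lam_total acc2).
by field; rewrite l1_ne0.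
Qed.

End AcceptableZero.

(* Bins of positive width laid out contiguously have strictly increasing
   centers: the center of bin k lies beyond the whole of bin i < k. *)
Lemma centers_increasing (R : realType) (N : nat) (xA : R) (dx xc : 'I_N -> R) :
  (forall i, 0 < dx i) ->
  (forall i : 'I_N, xc i = xA + \sum_(j < N | (j < i)%N) dx j + dx i / 2) ->
  forall i k : 'I_N, (i < k)%N -> xc i < xc k.
Proof.
move=> dx_gt0 xc_def i k i_lt_k; rewrite !xc_def.
have upto_i : \sum_(j < N | (j <= i)%N) dx j = dx i + \sum_(j < N | (j < i)%N) dx j.
  rewrite (bigD1 i) //=; congr (_ + _); apply: eq_bigl => j.
  by rewrite ltn_neqAle andbC.
have below_k : \sum_(j < N | (j <= i)%N) dx j <= \sum_(j < N | (j < k)%N) dx j.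
  rewrite [X in X <= _]big_mkcond [X in _ <= X]big_mkcond /=.
  apply: ler_sum => j _; case: ifP => j_le_i; case: ifP => j_lt_k //.
  - by move: j_lt_k; rewrite (leq_ltn_trans j_le_i i_lt_k).
  - exact: ltW.
by have := dx_gt0 i; have := dx_gt0 k; lra.
Qed.

Arguments centers_increasing {R N xA dx xc}.

Lemma centers_injective (R : realType) (N : nat) (xA : R) (dx xc : 'I_N -> R) :
  (forall i, 0 < dx i) ->
  (forall i : 'I_N, xc i = xA + \sum_(j < N | (j < i)%N) dx j + dx i / 2) ->
  injective xc.
Proof.
move=> dx_gt0 xc_def i k xc_eq; apply: val_inj.
have incr := centers_increasing dx_gt0 xc_def.
by case: (ltngtP i k) => [/incr|/incr|//]; rewrite xc_eq ltxx.
Qed.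
Arguments centers_injective {R N xA dx xc}.

Theorem mainTheorem11 (R : realType) (N : nat) (xA xB : R)
  (dx : 'I_N -> R) (xc : 'I_N -> R) (y : 'I_N -> nat) :
  (2 <= N)%N ->
  xA < xB ->
  (forall i, 0 < dx i) ->
  (* bins tile [xA, xB] contiguously in increasing order *)
  \sum_i dx i = xB - xA ->
  (forall i : 'I_N, xc i = xA + \sum_(j < N | (j < i)%N) dx j + dx i / 2) ->
  (2 <= nocc y)%N ->
  forall a1 a2 : R,
    acceptable xA xB xc y a1 -> acceptable xA xB xc y a2 ->
    a1 = a2 /\ lam xA xB y a1 = lam xA xB y a2.
Proof.
move=> _ xA_lt_xB dx_gt0 _ xc_def two_occ a1 a2 acc1 acc2.
have [i [j [occ_i occ_j i_ne_j]]] :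
    exists i j, [/\ (0 < y i)%N, (0 < y j)%N & i != j].
  have /card_gt1P [i [j [occ_i occ_j i_ne_j]]] := two_occ.
  by exists i, j; rewrite !inE in occ_i occ_j.
have M_ne0 : Mtot R y != 0.
  rewrite /Mtot gt_eqF // (bigD1 i) //= ltr_pwDl ?ltr0n //.
  by apply: sumr_ge0 => k _; rewrite ler0n.
pose mu a k := lam xA xB y a * (1 + a * dd xA xc k).
have same_intensity : forall k, (0 < y k)%N -> mu a1 k = mu a2 k.
  move=> k occ_k.
  apply: (balanced_ratio_sums (fun k => (y k)%:R) (mu a1) (mu a2) _ _ _ _ k).
  - by move=> m; rewrite ler0n.
  - by move=> m; rewrite ltr0n => occ_m; split; apply: intensity_gt0.
  - exact: cross_sum.
  - exact: cross_sum.
  - by rewrite ltr0n.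
have d_ne : dd xA xc i != dd xA xc j.
  apply: contra i_ne_j => /eqP; rewrite /dd => /addIr.
  by move/(centers_injective dx_gt0 xc_def) ->.
exact: (affine_two_points d_ne (lam_ne0 xA_lt_xB M_ne0 acc1)
  (same_intensity i occ_i) (same_intensity j occ_j)).
Qed.
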